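(* For each $c>0$ let $\alpha_c,\beta_c,\gamma:\mathbb{R}^n\times\mathbb{S}^m\to\mathbb{R}$ satisfy conditions (a)–(e) below, and let $\mathcal{A}_c(x,\Lambda):=f(x)+\alpha_c(x,\Lambda)\,\varphi(G(x),\beta_c(x,\Lambda)\Lambda)+\gamma(x,\Lambda)$ with $\varphi(Y,Z)=\|P(Z/2-Y)\|_F^2-\|Z\|_F^2/4$. Conditions: (a) $\alpha_c,\beta_c,\gamma$ are continuously differentiable for all $c>0$; (b) $\alpha_c(x,\Lambda)>0$ for all $x$ feasible for (NSDP), all $\Lambda$, all $c>0$; and for every KKT pair $(\bar x,\bar\Lambda)$ of (NSDP): (c) $\alpha_c(\bar x,\bar\Lambda)\beta_c(\bar x,\bar\Lambda)=1$ for all $c>0$; (d) $\gamma(\bar x,\bar\Lambda)=0$, $\nabla_x\gamma(\bar x,\bar\Lambda)=0$, $\nabla_\Lambda\gamma(\bar x,\bar\Lambda)=0$; (e) there exist neighborhoods $V_{\bar x}$, $V_{\bar\Lambda}$ of $\bar x,\bar\Lambda$ and a continuous $\Gamma:V_{\bar x}\to V_{\bar\Lambda}$ with $\Gamma(\bar x)=\bar\Lambda$ and $\gamma(x,\Gamma(x))=0$ for all $x\in V_{\bar x}$. Assume also that $G_{\mathrm{NSDP}}\neq\emptyset$, $G_{\mathrm{NLP}}(c)\neq\emptyset$ for all $c>0$, and for every $x\in G_{\mathrm{NSDP}}$ there is at least one $\Lambda$ such that $(x,\Lambda)$ is a KKT pair of (NSDP). Finally assume there exists $\hat c>0$ such that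 for all $c\ge\hat c$, every stationary point of $\mathcal{A}_c$ (a point where $\nabla_x\mathcal{A}_c=0$ and $\nabla_\Lambda\mathcal{A}_c=0$) is a KKT pair of (NSDP). Then: (a) $G_{\mathrm{NLP}}(c)=\tilde G_{\mathrm{NSDP}}$ for all $c\ge\hat c$; (b) $L_{\mathrm{NLP}}(c)\subseteq\{(x,\Lambda): x\in L_{\mathrm{NSDP}}\text{ and }\Lambda\text{ is a corresponding Lagrange multiplier}\}$ for all $c\ge\hat c$.
   Context: $\mathbb{S}^m$ is the space of real symmetric $m\times m$ matrices with inner product $\langle Y,Z\rangle=\operatorname{tr}(YZ)$ and Frobenius norm; $\mathbb{S}^m_+$ is the PSD cone and $P$ the orthogonal projection onto it. $f:\mathbb{R}^n\to\mathbb{R}$, $G:\mathbb{R}^n\to\mathbb{S}^m$ are twice continuously differentiable; (NSDP) is: minimize $f(x)$ s.t. $G(x)\in\mathbb{S}^m_+$. $\nabla G(x)^*Z=(\langle\partial G(x)/\partial x_i,Z\rangle)_{i=1}^n$. With $Y\circ Z=(YZ+ZY)/2$, $(x,\Lambda)$ is a KKT pair of (NSDP) if $\nabla f(x)-\nabla G(x)^*\Lambda=0$, $\Lambda\circ G(x)=0$, $G(x)\in\mathbb{S}^m_+$, $\Lambda\in\mathbb{S}^m_+$; then $\Lambda$ is a Lagrange multiplier corresponding to $x$. $G_{\mathrm{NSDP}}$ and $L_{\mathrm{NSDP}}$ are the sets of global and local minimizers of (NSDP); $G_{\mathrm{NLP}}(c)$ and $L_{\mathrm{NLP}}(c)$ are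 the sets of global and local minimizers of $\mathcal{A}_c$ over $\mathbb{R}^n\times\mathbb{S}^m$; $\tilde G_{\mathrm{NSDP}}:=\{(x,\Lambda): x\in G_{\mathrm{NSDP}}\text{ and }\Lambda\text{ is a corresponding Lagrange multiplier}\}$. *)

(* R : realType; R^n = 'rV[R]_n, S^m modelled inside 'M[R]_m. *)
From HB Require Import structures.
From mathcomp Require Import all_boot all_order all_algebra.
From mathcomp Require Import all_classical all_reals all_analysis.
Set Implicit Arguments. Unset Strict Implicit. Unset Printing Implicit Defensive.
Import Order.TTheory GRing.Theory Num.Theory.
Import numFieldNormedType.Exports.
Local Open Scope classical_set_scope.
Local Open Scope ring_scope.

Section Defs.
Variable R : realType.

Definition sym_mat (m : nat) (Y : 'M[R]_m) : Prop := Y^T = Y.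
Definition symmx (m : nat) (M : 'M[R]_m) : 'M[R]_m := 2^-1 *: (M + M^T).
Definition frob_inner (m : nat) (Y Z : 'M[R]_m) : R := \tr (Y *m Z).
Definition frob (m : nat) (Y : 'M[R]_m) : R := Num.sqrt (\tr (Y^T *m Y)).
Definition psd (m : nat) (Y : 'M[R]_m) : Prop :=
  sym_mat Y /\ forall v : 'rV[R]_m, 0 <= (v *m Y *m v^T) 0 0.
Definition projPSD (m : nat) (X : 'M[R]_m) : 'M[R]_m :=
  xget 0 [set Y | psd Y /\ forall W, psd W -> frob (X - Y) <= frob (X - W)].
Definition jordan (m : nat) (Y Z : 'M[R]_m) : 'M[R]_m := 2^-1 *: (Y *m Z + Z *m Y).
Definition phi (m : nat) (Y Z : 'M[R]_m) : R :=
  frob (projPSD (2^-1 *: Z - Y)) ^+ 2 - frob Z ^+ 2 / 4.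

Definition C1 (V W : normedModType R) (h : V -> W) : Prop :=
  (forall x, differentiable h x) /\ (forall v, continuous (fun x => 'd h x v)).
Definition C2 (V W : normedModType R) (h : V -> W) : Prop :=
  C1 h /\ (forall v, C1 (fun x => 'd h x v)).

(* a function on R^n x S^m, given as a function on 'rV_n * 'M_m whose values
   off R^n x S^m are irrelevant; symlift h reads it only on R^n x S^m *)
Definition symlift (n m : nat) (T : Type) (h : 'rV[R]_n * 'M[R]_m -> T) :
  'rV[R]_n * 'M[R]_m -> T := fun p => h (p.1, symmx p.2).

Definition evec (n : nat) (i : 'I_n) : 'rV[R]_n := delta_mx 0 i.

Definition KKT (n m : nat) (f : 'rV[R]_n -> R) (G : 'rV[R]_n -> 'M[R]_m)
  (x : 'rV[R]_n) (L : 'M[R]_m) : Prop :=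
  [/\ forall i : 'I_n, 'd f x (evec i) - frob_inner ('d G x (evec i)) L = 0,
      jordan L (G x) = 0, psd (G x) & psd L].

Definition feasible (n m : nat) (G : 'rV[R]_n -> 'M[R]_m) (x : 'rV[R]_n) : Prop :=
  psd (G x).

Definition G_NSDP (n m : nat) (f : 'rV[R]_n -> R) (G : 'rV[R]_n -> 'M[R]_m) :
  set 'rV[R]_n :=
  [set x | feasible G x /\ forall y, feasible G y -> f x <= f y].
Definition L_NSDP (n m : nat) (f : 'rV[R]_n -> R) (G : 'rV[R]_n -> 'M[R]_m) :
  set 'rV[R]_n :=
  [set x | feasible G x /\ \forall y \near x, feasible G y -> f x <= f y].

Definition tG_NSDP (n m : nat) (f : 'rV[R]_n -> R) (G : 'rV[R]_n -> 'M[R]_m) :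
  set ('rV[R]_n * 'M[R]_m) :=
  [set p | G_NSDP f G p.1 /\ KKT f G p.1 p.2].
Definition tL_NSDP (n m : nat) (f : 'rV[R]_n -> R) (G : 'rV[R]_n -> 'M[R]_m) :
  set ('rV[R]_n * 'M[R]_m) :=
  [set p | L_NSDP f G p.1 /\ KKT f G p.1 p.2].

Definition Aug (n m : nat) (f : 'rV[R]_n -> R) (G : 'rV[R]_n -> 'M[R]_m)
  (alpha beta : 'rV[R]_n * 'M[R]_m -> R) (gamma : 'rV[R]_n * 'M[R]_m -> R)
  (p : 'rV[R]_n * 'M[R]_m) : R :=
  f p.1 + alpha p * phi (G p.1) (beta p *: p.2) + gamma p.

Definition Gmin (n m : nat) (A : 'rV[R]_n * 'M[R]_m -> R) :
  set ('rV[R]_n * 'M[R]_m) :=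
  [set p | sym_mat p.2 /\ forall q, sym_mat q.2 -> A p <= A q].
Definition Lmin (n m : nat) (A : 'rV[R]_n * 'M[R]_m -> R) :
  set ('rV[R]_n * 'M[R]_m) :=
  [set p | sym_mat p.2 /\ \forall q \near p, sym_mat q.2 -> A p <= A q].

(* stationary point over R^n x S^m: grad_x A = 0 and grad_Lambda A = 0
   (the latter in S^m, i.e. all derivatives of A(x, .) along S^m vanish) *)
Definition stationary (n m : nat) (A : 'rV[R]_n * 'M[R]_m -> R)
  (x : 'rV[R]_n) (L : 'M[R]_m) : Prop :=
  [/\ sym_mat L,
      (forall v : 'rV[R]_n, 'd (fun y : 'rV[R]_n => A (y, L)) x v = 0) &
      (forall H : 'M[R]_m, 'd (fun M : 'M[R]_m => symlift A (x, M)) L H = 0)].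

End Defs.

(* At a KKT pair (x, L), complementarity tr (L G(x)) = 0 and the self-duality
   of the PSD cone make b L / 2 the nearest PSD matrix to b L / 2 - G(x) for
   every b > 0, so phi(G(x), b L) = 0 and A_c(x, L) = f(x).  At a feasible x,
   projecting onto the cone shrinks the norm of Z / 2 - G(x) below that of
   Z / 2, so phi(G(x), Z) <= 0 and A_c <= f + gamma.  Minimizers of A_c are
   stationary, hence KKT pairs, on which A_c = f; comparing with a KKT pair at a
   global minimizer of (NSDP) gives (a), and comparing along the curve
   y |-> (y, Gamma(y)), on which gamma vanishes, gives (b).  Self-duality,
   tr (A B) >= 0 for PSD A and B, follows by writing B as a sum of rank-one
   matrices, peeled off one Schur complement at a time. *)

From HB Require Import structures.
From mathcomp Require Import all_boot all_order all_algebra.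
From mathcomp Require Import all_classical all_reals all_analysis.
From mathcomp Require Import ring lra.
Import Order.TTheory GRing.Theory Num.Theory.
Import numFieldNormedType.Exports.
Local Open Scope classical_set_scope.
Local Open Scope ring_scope.

Lemma quad_ge0_discr (R : realFieldType) (a b c : R) : 0 <= c ->
  (forall t, 0 <= a + 2 * t * b + t ^+ 2 * c) -> b ^+ 2 <= a * c.
Proof.
rewrite le_eqVlt => /predU1P[<- | c_gt0] quad_ge0.
  suff -> : b = 0 by rewrite expr0n mulr0.
  apply/eqP/negP => /negP b_neq0; have := quad_ge0 (- (a + 1) / (2 * b)).
  have -> : 2 * (- (a + 1) / (2 * b)) * b = - (a + 1) by field.
  by rewrite mulr0; lra.
have := quad_ge0 (- b / c).
have -> : a + 2 * (- b / c) * b + (- b / c) ^+ 2 * c = (a * c - b ^+ 2) / c.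
  by field; rewrite gt_eqF.
by rewrite pmulr_lge0 ?invr_gt0 // subr_ge0.
Qed.

Section PSDCone.
Context {R : realType} {m : nat}.
Implicit Types (A B : 'M[R]_m) (u v : 'rV[R]_m).

Lemma mxtrace11 (M : 'M[R]_1) : \tr M = M 0 0.
Proof. by rewrite /mxtrace big_ord1. Qed.

Definition mxform B u v : R := \tr (u *m B *m v^T).

Lemma psd_mxform_ge0 B u : psd B -> 0 <= mxform B u u.
Proof. by case=> _; rewrite /mxform mxtrace11. Qed.

Lemma mxformC B u v : sym_mat B -> mxform B u v = mxform B v u.
Proof. by move=> sB; rewrite /mxform -mxtrace_tr !trmx_mul trmxK sB mulmxA. Qed.

Lemma mxform_delta B i j : mxform B (delta_mx 0 i) (delta_mx 0 j) = B i j.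
Proof. by rewrite /mxform mxtrace11 -rowE trmx_delta -colE !mxE. Qed.

Lemma psd_quad_ge0 B u v t : psd B ->
  0 <= mxform B u u + 2 * t * mxform B u v + t ^+ 2 * mxform B v v.
Proof.
move=> pB; have := psd_mxform_ge0 B (u + t *: v) pB.
rewrite /mxform linearD linearZ /= !mulmxDl !mulmxDr -!scalemxAl -!scalemxAr.
rewrite !mxtraceD !mxtraceZ -!/(mxform _ _ _) (mxformC B v u pB.1).
by congr (0 <= _); ring.
Qed.

Lemma psd_offdiag0 B i j : psd B -> B j j = 0 -> B i j = 0.
Proof.
move=> pB Bjj0; apply/eqP; rewrite -sqrf_eq0 eq_le sqr_ge0 andbT.
rewrite -(mulr0 (B i i)) -[X in _ * X]Bjj0 mulrC -(mxform_delta B i j).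
rewrite -(mxform_delta B i i) -(mxform_delta B j j).
apply: quad_ge0_discr => [|t]; first exact: psd_mxform_ge0.
rewrite (mxformC B _ _ pB.1); exact: psd_quad_ge0.
Qed.

Definition schur_compl B i := B - (B i i)^-1 *: ((row i B)^T *m row i B).

Lemma psd_schur_compl B i : psd B -> 0 < B i i -> psd (schur_compl B i).
Proof.
move=> pB Bii_gt0; split.
  by rewrite /sym_mat /schur_compl linearB linearZ /= trmx_mul trmxK pB.1.
move=> v; rewrite -mxtrace11 -/(mxform _ v v) /mxform /schur_compl.
rewrite mulmxBr mulmxBl raddfB /= -scalemxAr -scalemxAl mxtraceZ.
have row_form : v *m (row i B)^T = (mxform B v (delta_mx 0 i))%:M.
  by rewrite rowE trmx_mul pB.1 mulmxA [LHS]mx11_scalar -mxtrace11.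
rewrite !mulmxA row_form -(mulmxA _ (row i B)) mul_scalar_mx mxtraceZ.
rewrite -[row i B *m v^T]trmxK.
rewrite trmx_mul trmxK row_form mxtrace_tr mxtrace_scalar -/(mxform B v v) mulr1n.
rewrite subr_ge0 ler_pdivrMl // -expr2 mulrC -(mxform_delta B i i).
apply: quad_ge0_discr => [|t]; [exact: psd_mxform_ge0 | exact: psd_quad_ge0].
Qed.

Lemma schur_compl_diag B i j :
  schur_compl B i j j = B j j - (B i i)^-1 * B i j ^+ 2.
Proof. by rewrite /schur_compl !mxE big_ord1 !mxE expr2. Qed.

Lemma psd_sum_rank1 B : psd B -> exists s : seq 'rV[R]_m, B = \sum_(r <- s) r^T *m r.
Proof.
(* Induction on the number of nonzero diagonal entries, which the Schur
   complement at a nonzero diagonal entry decreases. *)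
have [k] := ubnP #|[pred j : 'I_m | B j j != 0]|.
elim: k B => [//|k IHk] B; rewrite ltnS => card_le pB.
have [i /= Bii_neq0 | diag0] := pickP [pred j | B j j != 0]; last first.
  exists [::]; rewrite big_nil; apply/matrixP => i j; rewrite mxE.
  by apply: psd_offdiag0 => //; apply/eqP/negbFE/diag0.
have Bii_gt0 : 0 < B i i.
  by rewrite lt_def Bii_neq0 -(mxform_delta B i i) psd_mxform_ge0.
have [|s defS] := IHk (schur_compl B i) _ (psd_schur_compl B i pB Bii_gt0).
  rewrite (cardD1 i) inE Bii_neq0 add1n in card_le.
  apply: leq_ltn_trans card_le; apply: subset_leq_card; apply/fintype.subsetP => j.
  rewrite !inE schur_compl_diag; have [->|j_neq_i] /= := eqVneq j i.
    by rewrite expr2 mulKf // subrr eqxx.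
  apply: contraNN => /eqP Bjj0.
  by rewrite Bjj0 (psd_offdiag0 B i j pB Bjj0) expr0n mulr0 subrr.
exists (Num.sqrt (B i i)^-1 *: row i B :: s).
rewrite big_cons -defS /schur_compl !linearZ /= -scalemxAl scalerA.
by rewrite -expr2 sqr_sqrtr ?invr_ge0 ?ltW // scalerN addrC subrK.
Qed.

Lemma mxtrace_psd_mul_ge0 A B : psd A -> psd B -> 0 <= \tr (A *m B).
Proof.
move=> pA /psd_sum_rank1[s ->]; rewrite mulmx_sumr raddf_sum /=.
apply: sumr_ge0 => r _; rewrite mulmxA mxtrace_mulC mulmxA.
exact: psd_mxform_ge0.
Qed.

Lemma jordan_mxtrace_eq0 A B : jordan A B = 0 -> \tr (A *m B) = 0.
Proof.
move=> /(congr1 mxtrace); rewrite mxtraceZ mxtraceD mxtrace0 (mxtrace_mulC B).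
by move/eqP; rewrite mulf_eq0 invr_eq0 pnatr_eq0 /= -mulr2n mulrn_eq0 /= => /eqP.
Qed.
End PSDCone.

Lemma ge0_of_small_perturb (R : realFieldType) (a b : R) : 0 <= b ->
  (forall t, 0 < t <= 1 -> 0 <= a + t * b) -> 0 <= a.
Proof.
move=> b_ge0 small; rewrite leNgt; apply/negP => a_lt0.
have ba_gt0 : 0 < b - a by lra.
have t_range : 0 < - a / (b - a) <= 1.
  by rewrite divr_gt0 ?oppr_gt0 //= ler_pdivrMr // mul1r; lra.
have := small _ t_range.
have -> : a + - a / (b - a) * b = - (a ^+ 2 / (b - a)) by field; rewrite gt_eqF.
have : 0 < a ^+ 2 / (b - a) by rewrite divr_gt0 //; nra.
lra.
Qed.

Section FrobeniusProjection.
Context {R : realType} {m : nat}.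
Implicit Types (H P W X Y Z : 'M[R]_m).

Definition mxdot X Y : R := \tr (X^T *m Y).

Lemma mxdotC X Y : mxdot X Y = mxdot Y X.
Proof. by rewrite /mxdot -mxtrace_tr trmx_mul trmxK. Qed.

Lemma mxdotDr X Y Z : mxdot X (Y + Z) = mxdot X Y + mxdot X Z.
Proof. by rewrite /mxdot mulmxDr mxtraceD. Qed.

Lemma mxdotZr a X Y : mxdot X (a *: Y) = a * mxdot X Y.
Proof. by rewrite /mxdot -scalemxAr mxtraceZ. Qed.

Lemma mxdotNr X Y : mxdot X (- Y) = - mxdot X Y.
Proof. by rewrite -scaleN1r mxdotZr mulN1r. Qed.

Lemma mxdotDl X Y Z : mxdot (X + Y) Z = mxdot X Z + mxdot Y Z.
Proof. by rewrite mxdotC mxdotDr !(mxdotC Z). Qed.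

Lemma mxdotZl a X Y : mxdot (a *: X) Y = a * mxdot X Y.
Proof. by rewrite mxdotC mxdotZr mxdotC. Qed.

Lemma mxdotNl X Y : mxdot (- X) Y = - mxdot X Y.
Proof. by rewrite mxdotC mxdotNr mxdotC. Qed.

Lemma mxdotDD X Y : mxdot (X + Y) (X + Y) = mxdot X X + 2 * mxdot X Y + mxdot Y Y.
Proof. by rewrite mxdotDl !mxdotDr (mxdotC Y X); ring. Qed.

Lemma mxdotBB X Y : mxdot (X - Y) (X - Y) = mxdot X X - 2 * mxdot X Y + mxdot Y Y.
Proof. by rewrite mxdotDD mxdotNl !mxdotNr opprK; ring. Qed.

Lemma mxdot0r X : mxdot X 0 = 0.
Proof. by rewrite /mxdot mulmx0 mxtrace0. Qed.

Lemma mxdotE X Y : mxdot X Y = \sum_i \sum_j X j i * Y j i.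
Proof. by apply: eq_bigr => i _; rewrite !mxE; apply: eq_bigr => j _; rewrite mxE. Qed.

Lemma mxdot_ge0 X : 0 <= mxdot X X.
Proof. by rewrite mxdotE; do 2![apply: sumr_ge0 => ? _]; rewrite -expr2 sqr_ge0. Qed.

Lemma mxdot_eq0 X : (mxdot X X == 0) = (X == 0).
Proof.
apply/idP/eqP => [|->]; last by rewrite mxdot0r.
rewrite mxdotE psumr_eq0 => [/allP X0|i _]; last first.
  by apply: sumr_ge0 => j _; rewrite -expr2 sqr_ge0.
apply/matrixP => j i; have /X0 := mem_index_enum i.
rewrite /= psumr_eq0 => [/allP/(_ j (mem_index_enum j))|k _]; last first.
  by rewrite -expr2 sqr_ge0.
by rewrite -expr2 sqrf_eq0 mxE => /eqP.
Qed.

Lemma frob_sqr X : frob X ^+ 2 = mxdot X X.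
Proof. by rewrite sqr_sqrtr // mxdot_ge0. Qed.

Lemma frob_le X Y : (frob X <= frob Y) = (mxdot X X <= mxdot Y Y).
Proof. by rewrite ler_sqrt // mxdot_ge0. Qed.

Lemma mxdot_psd_ge0 {X Y} : psd X -> psd Y -> 0 <= mxdot X Y.
Proof. by move=> pX pY; rewrite /mxdot pX.1; exact: mxtrace_psd_mul_ge0. Qed.

Lemma psdZ a X : 0 <= a -> psd X -> psd (a *: X).
Proof.
move=> a_ge0 [sX X_ge0]; split; first by rewrite /sym_mat linearZ /= sX.
by move=> v; rewrite -scalemxAr -scalemxAl mxE mulr_ge0.
Qed.

Lemma psd0 : psd (0 : 'M[R]_m).
Proof. by split=> [|v]; rewrite ?/sym_mat ?trmx0 // mulmx0 mul0mx mxE. Qed.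

Definition nearest_psd X P := psd P /\ forall W, psd W -> frob (X - P) <= frob (X - W).

Lemma projPSDP {X P} : nearest_psd X P -> nearest_psd X (projPSD X).
Proof. exact: xgetI. Qed.

Lemma projPSD_junk X : ~ (exists P, nearest_psd X P) -> projPSD X = 0.
Proof. by move=> none; rewrite /projPSD xgetPN // => P nP; apply: none; exists P. Qed.

Lemma projPSD_psd X : psd (projPSD X).
Proof.
have [[P /projPSDP[]//] | /projPSD_junk->] := pselect (exists P, nearest_psd X P).
exact: psd0.
Qed.

Lemma projPSD_mxdot_le X : mxdot (projPSD X) (projPSD X) <= mxdot X (projPSD X).
Proof.
have [[P0 /projPSDP[pP P_min]] | /projPSD_junk->] := pselect (exists P, nearest_psd X P);
  last by rewrite !mxdot0r.
set P := projPSD X in pP P_min *; rewrite -subr_ge0.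
apply: (@ge0_of_small_perturb _ _ (mxdot P P / 2)) => [|t /andP[t_gt0 t_le1]].
  by rewrite divr_ge0 ?mxdot_ge0.
have psd_shrunk : psd ((1 - t) *: P) by apply: psdZ; rewrite ?subr_ge0.
have := P_min _ psd_shrunk; rewrite frob_le.
have -> : X - (1 - t) *: P = (X - P) + t *: P.
  by rewrite scalerBl scale1r opprB addrA addrAC.
rewrite (mxdotDD (X - P)) !mxdotZr mxdotZl (mxdotDl X (- P) P) (mxdotNl P) => h.
have : 0 <= t * (2 * (mxdot X P - mxdot P P) + t * mxdot P P) by lra.
by rewrite pmulr_rge0 //; lra.
Qed.

Lemma projPSD_orth H Y : psd H -> psd Y -> mxdot H Y = 0 -> projPSD (H - Y) = H.
Proof.
move=> pH pY HY0.
have dist_sqr W : mxdot (H - Y - W) (H - Y - W)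
    = mxdot (H - W) (H - W) + 2 * mxdot W Y + mxdot Y Y.
  by rewrite addrAC (mxdotBB (H - W) Y) (mxdotDl H (- W) Y) (mxdotNl W Y) HY0; ring.
have nearest_H : nearest_psd (H - Y) H.
  split=> // W pW; rewrite frob_le !dist_sqr subrr mxdot0r.
  by have := mxdot_ge0 (H - W); have := mxdot_psd_ge0 pW pY; lra.
have [pP P_min] := projPSDP nearest_H.
apply/eqP; rewrite eq_sym -subr_eq0 -mxdot_eq0 eq_le mxdot_ge0 andbT.
have := P_min H pH; rewrite frob_le !dist_sqr subrr mxdot0r.
by have := mxdot_psd_ge0 pP pY; lra.
Qed.

Lemma phi_eq0 Y Z : psd Y -> psd Z -> \tr (Z *m Y) = 0 -> phi Y Z = 0.
Proof.
move=> pY pZ ZY0; have pH : psd (2^-1 *: Z) by apply: psdZ; rewrite ?invr_ge0.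
have HY0 : mxdot (2^-1 *: Z) Y = 0 by rewrite mxdotZl /mxdot pZ.1 ZY0 mulr0.
by rewrite /phi projPSD_orth // !frob_sqr mxdotZl mxdotZr; field.
Qed.

Lemma phi_le0 Y Z : psd Y -> phi Y Z <= 0.
Proof.
move=> pY; rewrite /phi !frob_sqr.
set H := 2^-1 *: Z; set P := projPSD (H - Y).
have := projPSD_mxdot_le (H - Y); have := mxdot_psd_ge0 pY (projPSD_psd (H - Y)).
have := mxdot_ge0 (H - P); rewrite mxdotBB -/P (mxdotDl H (- Y) P) (mxdotNl Y P).
have -> : mxdot Z Z / 4 = mxdot H H by rewrite mxdotZl mxdotZr; field.
lra.
Qed.
End FrobeniusProjection.

Section LocalMinimum.
Context {R : realType} {V : normedModType R}.
Implicit Types (f : V -> R) (x v : V).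

Lemma diff_locmin_ge0 f x v : differentiable f x ->
  (\forall y \near x, f x <= f y) -> 0 <= 'd f x v.
Proof.
move=> df fx_min; have dv := diff_derivable (v := v) df.
rewrite -deriveE // /derive cvg_at_rightE //; apply: limr_ge.
  rewrite -(cvg_at_rightE (fun h => h^-1 *: ((f \o shift x) _ - f x))) //.
  apply: cvg_trans dv; apply: cvg_app.
  move=> A [e e_gt0 Ae]; exists e => // y ye y_gt0; apply: Ae => //.
  exact/lt0r_neq0.
have line_min : \forall h \near (0 : R), f x <= f (h *: v + x).
  have : (fun h : R => h *: v + x) @ (0 : R) --> x.
    rewrite -[X in _ --> X]add0r -[X in X + x](scale0r v).
    by apply: cvgD; [exact: cvgZ cvg_id (cvg_cst v) | exact: cvg_cst].
  by move=> line_cvg; exact: line_cvg fx_min.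
near=> h; apply: mulr_ge0.
  by rewrite invr_ge0; apply: ltW; near: h; exists 1 => /=.
rewrite subr_ge0; near: h; move: line_min => /nbhs_ballP[e e_gt0 line_min].
by exists e => // y ye _; apply: line_min.
Unshelve. all: by end_near.
Qed.

Lemma diff_not_differentiable f x v : ~ differentiable f x -> 'd f x v = 0.
Proof.
move=> not_df; rewrite /diff xgetPN //= => df df_spec; apply: not_df.
apply/diffP; rewrite /diff.
match goal with |- context [xget point ?P] => exact: (@xgetI _ point P df df_spec) end.
Qed.

Lemma diff_locmin f x v : (\forall y \near x, f x <= f y) -> 'd f x v = 0.
Proof.
move=> fx_min; have [df | not_df] := pselect (differentiable f x).
  apply/eqP; rewrite eq_le -oppr_ge0 -linearN /=.
  by rewrite !diff_locmin_ge0.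
exact: diff_not_differentiable.
Qed.
End LocalMinimum.

Lemma within_continuous_cvg {T U : topologicalType} (A : set T) (g : T -> U) x :
  nbhs x A -> {within A, continuous g} -> g @ x --> g x.
Proof. by move=> Ax /(_ x); rewrite /continuous_at -(nbhs_subspace_interior Ax). Qed.

Section Stationarity.
Context {R : realType} {n m : nat}.

Lemma trmx_continuous : continuous (fun M : 'M[R]_m => M^T).
Proof.
move=> L A [P P_nbhs P_sub]; exists (fun i j => P j i).
  by move=> i j; have := P_nbhs j i; rewrite mxE.
by move=> M M_near; apply: P_sub => i j /=; rewrite mxE; exact: M_near.
Qed.

Lemma symmx_continuous : continuous (@symmx R m).
Proof.
move=> L; rewrite /continuous_at /symmx.
exact: cvgZ (cvg_cst _) (cvgD cvg_id (trmx_continuous L)).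
Qed.

Lemma symmx_id (L : 'M[R]_m) : sym_mat L -> symmx L = L.
Proof. by rewrite /symmx => ->; apply/matrixP => i j; rewrite !mxE; field. Qed.

Lemma sym_symmx (M : 'M[R]_m) : sym_mat (symmx M).
Proof. by rewrite /sym_mat /symmx linearZ /= linearD /= trmxK addrC. Qed.

Lemma stationary_locmin {A : 'rV[R]_n * 'M[R]_m -> R} {x L} : sym_mat L ->
  (\forall q \near (x, L), sym_mat q.2 -> A (x, L) <= A q) -> stationary A x L.
Proof.
move=> sL AxL_min; split=> // [v | H]; apply: diff_locmin.
  have : (fun y => (y, L)) @ x --> (x, L).
    apply: (@cvg_pair _ _ _ (nbhs x) (nbhs x) (nbhs L)); first exact: cvg_id.
    exact: cvg_cst.
  move=> /(_ _ AxL_min) near_x.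
  have {}near_x : \forall y \near x, sym_mat L -> A (x, L) <= A (y, L) := near_x.
  by apply: filterS near_x => y; apply.
have : (fun M => (x, symmx M)) @ L --> (x, L).
  apply: (@cvg_pair _ _ _ (nbhs L) (nbhs x) (nbhs L)); first exact: cvg_cst.
  by have := symmx_continuous L; rewrite /continuous_at (symmx_id L sL).
rewrite /symlift /= (symmx_id L sL) => /(_ _ AxL_min) near_L.
have {}near_L : \forall M \near L, sym_mat (symmx M) -> A (x, L) <= A (x, symmx M)
  := near_L.
by apply: filterS near_L => M; apply; exact: sym_symmx.
Qed.
End Stationarity.

Section MeritFunction.
Context {R : realType} {n m : nat}.
Context {f : 'rV[R]_n -> R} {G : 'rV[R]_n -> 'M[R]_m}.

Lemma KKT_feasible {x L} : KKT f G x L -> feasible G x.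
Proof. by case. Qed.

Lemma KKT_psd {x L} : KKT f G x L -> psd L.
Proof. by case. Qed.

Section ExactMerit.
Context {A : 'rV[R]_n * 'M[R]_m -> R}.
Hypothesis A_KKT : forall x L, KKT f G x L -> A (x, L) = f x.
Hypothesis stationary_KKT : forall x L, stationary A x L -> KKT f G x L.

Lemma Gmin_KKT {x L} : Gmin A (x, L) -> KKT f G x L.
Proof.
case=> sL AxL_min; apply/stationary_KKT/stationary_locmin => //.
exact: filterE.
Qed.

Lemma Gmin_eq_tG :
  (exists x L, G_NSDP f G x /\ KKT f G x L) -> Gmin A !=set0 -> Gmin A = tG_NSDP f G.
Proof.
move=> [x0 [L0 [x0_min KKT0]]] [[x1 L1] min1]; have KKT1 := Gmin_KKT min1.
apply/seteqP; split=> [[x L] min | [x L] [[x_feas x_min] K]].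
  have K := Gmin_KKT min; split=> //; split; first exact: KKT_feasible K.
  move=> y y_feas; rewrite -(A_KKT _ _ K); apply: le_trans (min.2 (x0, L0) _) _.
    exact: (KKT_psd KKT0).1.
  by rewrite (A_KKT _ _ KKT0); apply: x0_min.2.
split=> [|q sq]; first exact: (KKT_psd K).1.
rewrite (A_KKT _ _ K); apply: le_trans (x_min _ (KKT_feasible KKT1)) _.
by rewrite -(A_KKT _ _ KKT1); apply: min1.2.
Qed.

Lemma Lmin_sub_tL :
  (forall x L, KKT f G x L -> exists Gam : 'rV[R]_n -> 'M[R]_m, Gam @ x --> L /\
     \forall y \near x, sym_mat (Gam y) /\ (feasible G y -> A (y, Gam y) <= f y)) ->
  Lmin A `<=` tL_NSDP f G.
Proof.
move=> curve [x L] [sL AxL_min].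
have K := stationary_KKT _ _ (stationary_locmin sL AxL_min).
split=> //; split; first exact: KKT_feasible K.
have [Gam [Gam_cvg Gam_below]] := curve x L K.
have : (fun y => (y, Gam y)) @ x --> (x, L).
  exact: (@cvg_pair _ _ _ (nbhs x) (nbhs x) (nbhs L)) cvg_id Gam_cvg.
move=> /(_ _ AxL_min) near_x.
apply: filterS2 Gam_below near_x => y [sGy below] AxL_le y_feas.
by rewrite -(A_KKT _ _ K); apply: le_trans (below y_feas); exact: AxL_le.
Qed.
End ExactMerit.

Context {alpha beta gamma : 'rV[R]_n * 'M[R]_m -> R}.

Lemma Aug_KKT x L : KKT f G x L -> 0 < alpha (x, L) ->
  alpha (x, L) * beta (x, L) = 1 -> gamma (x, L) = 0 ->
  Aug f G alpha beta gamma (x, L) = f x.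
Proof.
case=> _ /jordan_mxtrace_eq0 LG0 pG pL alpha_gt0 ab1 gamma0.
have beta_gt0 : 0 < beta (x, L) by rewrite -(pmulr_rgt0 _ alpha_gt0) ab1.
rewrite /Aug /= gamma0 phi_eq0 ?mulr0 ?addr0 //; first exact: psdZ (ltW beta_gt0) pL.
by rewrite -scalemxAl mxtraceZ LG0 mulr0.
Qed.

Lemma Aug_le_feasible x L : feasible G x -> 0 <= alpha (x, L) ->
  Aug f G alpha beta gamma (x, L) <= f x + gamma (x, L).
Proof.
move=> x_feas alpha_ge0; rewrite /Aug /= lerD2r gerDl.
exact: mulr_ge0_le0 alpha_ge0 (phi_le0 _ _ x_feas).
Qed.
End MeritFunction.

Theorem theorem3p8 (R : realType) (n m : nat)
  (f : 'rV[R]_n -> R) (G : 'rV[R]_n -> 'M[R]_m)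
  (alpha beta : R -> 'rV[R]_n * 'M[R]_m -> R)
  (gamma : 'rV[R]_n * 'M[R]_m -> R) (chat : R) :
  (* standing assumptions *)
  C2 f -> C2 G -> (forall x, sym_mat (G x)) ->
  (* (a) *)
  (forall c, 0 < c -> C1 (symlift (alpha c)) /\ C1 (symlift (beta c))) ->
  C1 (symlift gamma) ->
  (* (b) *)
  (forall c x L, 0 < c -> feasible G x -> sym_mat L -> 0 < alpha c (x, L)) ->
  (* (c), (d), (e) at every KKT pair *)
  (forall xb Lb, KKT f G xb Lb ->
     [/\ (forall c, 0 < c -> alpha c (xb, Lb) * beta c (xb, Lb) = 1),
         [/\ gamma (xb, Lb) = 0,
             (forall v : 'rV[R]_n, 'd (fun y : 'rV[R]_n => gamma (y, Lb)) xb v = 0) &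
             (forall H : 'M[R]_m,
                'd (fun M : 'M[R]_m => symlift gamma (xb, M)) Lb H = 0)] &
         exists (U : set 'rV[R]_n) (W : set 'M[R]_m) (Gam : 'rV[R]_n -> 'M[R]_m),
           [/\ nbhs xb U /\ nbhs Lb W,
               (forall x, U x -> sym_mat (Gam x) /\ W (Gam x)),
               {within U, continuous Gam},
               Gam xb = Lb &
               (forall x, U x -> gamma (x, Gam x) = 0)]]) ->
  G_NSDP f G !=set0 ->
  (forall c, 0 < c -> Gmin (Aug f G (alpha c) (beta c) gamma) !=set0) ->
  (forall x, G_NSDP f G x -> exists L, KKT f G x L) ->
  0 < chat ->
  (forall c, chat <= c -> forall x L,
     stationary (Aug f G (alpha c) (beta c) gamma) x L -> KKT f G x L) ->
  (forall c, chat <= c -> Gmin (Aug f G (alpha c) (beta c) gamma) = tG_NSDP f G) /\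
  (forall c, chat <= c -> Lmin (Aug f G (alpha c) (beta c) gamma) `<=` tL_NSDP f G).
Proof.
move=> _ _ _ _ _ alpha_gt0 at_KKT G_ne Gmin_ne mult chat_gt0 stat_KKT.
have Aug_KKT_c c x L : 0 < c -> KKT f G x L ->
    Aug f G (alpha c) (beta c) gamma (x, L) = f x.
  move=> c_gt0 K; have [ab1 [gamma0 _ _] _] := at_KKT x L K.
  have alpha_gt0_at := alpha_gt0 c x L c_gt0 (KKT_feasible K) (KKT_psd K).1.
  exact: Aug_KKT K alpha_gt0_at (ab1 c c_gt0) gamma0.
split=> c c_ge; have c_gt0 := lt_le_trans chat_gt0 c_ge.
  apply: Gmin_eq_tG => [x L | x L | | ]; [exact: Aug_KKT_c | exact: stat_KKT | | ].
    by have [x x_min] := G_ne; have [L K] := mult x x_min; exists x, L.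
  exact: Gmin_ne.
apply: Lmin_sub_tL => [x L | x L | x L K]; [exact: Aug_KKT_c | exact: stat_KKT |].
have [_ _ [U [W [Gam [[U_x _] U_Gam Gam_cont GamL gamma0]]]]] := at_KKT x L K.
exists Gam; split; first by rewrite -GamL; exact: within_continuous_cvg Gam_cont.
apply: filterS U_x => y U_y; have [sGy _] := U_Gam y U_y; split=> // y_feas.
rewrite -[f y]addr0 -(gamma0 y U_y); apply: Aug_le_feasible => //.
exact/ltW/alpha_gt0.
Qed.
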